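(* For all positive integers $m_1,m_2$ there exists an integer sequence $(f_j)_{j\ge0}$ such that for every $j\in\mathbb{Z}_{\ge0}$: (i) $0\le f_j\le m_1+m_2$; (ii) $f_j+j$ is divisible by $m_1$; and (iii) $((f_j-j)\bmod m_2)\in\{0,1,\dots,m_1\}$.
   Context: For integers $a$ and $b>0$, $(a\bmod b)\in\{0,\dots,b-1\}$ denotes the remainder of $a$ upon division by $b$. *)

(* integers Z. Z.modulo a b for b > 0 lies in [0, b-1],
   matching the paper's convention for (a mod b). *)
From Stdlib Require Import ZArith.

(* Take f_j = r + k m1 with r = (-j) mod m1, so that (ii) holds for every k >= 0.
   Moving along the progression r - j, r - j + m1, r - j + 2 m1, ... the residue
   mod m2 advances in steps of m1, so it cannot jump over the window [0, m1]: it
   lands there after wrapping around m2 at most once, i.e. with k m1 < m2. *)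
From Stdlib Require Import ZArith Lia.
Open Scope Z_scope.

Definition ceil_div (n d : Z) : Z := (n + d - 1) / d.

Lemma ceil_div_mul_bounds (n d : Z) :
  0 < d -> n <= ceil_div n d * d < n + d.
Proof.
  intro hd; unfold ceil_div.
  pose proof (Z.div_mod (n + d - 1) d ltac:(lia)).
  pose proof (Z.mod_pos_bound (n + d - 1) d hd).
  lia.
Qed.

Definition steps_to_window (d m a : Z) : Z :=
  if a mod m <=? d then 0 else ceil_div (m - a mod m) d.

Lemma steps_to_window_spec (d m a : Z) : 0 < d -> 0 < m ->
  let k := steps_to_window d m a in
  0 <= k /\ k * d < m /\ (a + k * d) mod m <= d.
Proof.
  intros hd hm k.
  pose proof (Z.div_mod a m ltac:(lia)) as a_eq.
  pose proof (Z.mod_pos_bound a m hm) as s_bound.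
  unfold k, steps_to_window; set (s := a mod m) in *.
  destruct (Z.leb_spec s d) as [s_le | s_gt].
  - rewrite Z.mul_0_l, Z.add_0_r. lia.
  - pose proof (ceil_div_mul_bounds (m - s) d hd) as k_bounds.
    set (c := ceil_div (m - s) d) in *.
    assert (c_pos : 0 < c) by nia.
    split; [lia | split; [lia |]].
    (* a + c d = m (a / m + 1) + (s + c d - m), and the last term lies in [0, d) *)
    rewrite <- (Z.mod_unique (a + c * d) m (a / m + 1) (s + c * d - m)); lia.
Qed.

Lemma divide_mod_opp_add (m x : Z) : m <> 0 -> (m | (- x) mod m + x).
Proof.
  intro hm.
  rewrite Z.mod_eq by exact hm.
  replace (- x - m * (- x / m) + x) with (m * - (- x / m)) by ring.
  apply Z.divide_factor_l.
Qed.

Theorem lemma16 (m1 m2 : Z) (hm1 : 0 < m1) (hm2 : 0 < m2) :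
  exists f : nat -> Z, forall j : nat,
    (0 <= f j <= m1 + m2) /\
    (m1 | f j + Z.of_nat j) /\
    (0 <= (f j - Z.of_nat j) mod m2 <= m1).
Proof.
  set (r j := (- Z.of_nat j) mod m1).
  set (k j := steps_to_window m1 m2 (r j - Z.of_nat j)).
  exists (fun j => r j + k j * m1).
  intro j.
  pose proof (Z.mod_pos_bound (- Z.of_nat j) m1 hm1) as r_bound.
  destruct (steps_to_window_spec m1 m2 (r j - Z.of_nat j) hm1 hm2)
    as (k_nonneg & k_lt & window).
  fold (k j) in k_nonneg, k_lt, window.
  fold (r j) in r_bound.
  split; [lia | split].
  - replace (r j + k j * m1 + Z.of_nat j) with (r j + Z.of_nat j + k j * m1) by ring.
    apply Z.divide_add_r; [apply divide_mod_opp_add; lia | apply Z.divide_factor_r].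
  - replace (r j + k j * m1 - Z.of_nat j) with (r j - Z.of_nat j + k j * m1) by ring.
    split; [apply Z.mod_pos_bound; exact hm2 | exact window].
Qed.
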